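(* Let $s_1,\dots,s_N\subseteq\mathcal{H}$ be mutually orthogonal nonzero subspaces, and let $\mathbb{Q}$ be the collection of all $N$-tuples $(\sigma'_1,\dots,\sigma'_N)$ of density matrices on $\mathcal{H}$ such that for every $i$ the support of $\sigma'_i$ equals $s_i$ (i.e. $\sigma'_i$ is supported in $s_i$ and $\mathrm{rank}(\sigma'_i)=\dim s_i$). Then either every tuple in $\mathbb{Q}$ is perfectly distinguishable by LOCC, or no tuple in $\mathbb{Q}$ is. Furthermore, if they are perfectly distinguishable by LOCC, there exists a single LOCC-implementable (in particular separable) POVM $\Pi_{\mathbb{Q}}=\{\Pi_1,\dots,\Pi_N\}$ such that $\mathrm{Tr}(\Pi_i\sigma'_j)=\delta_{ij}$ for every tuple $(\sigma'_1,\dots,\sigma'_N)\in\mathbb{Q}$.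
   Context: $\mathcal{H}=\mathcal{H}_1\otimes\cdots\otimes\mathcal{H}_m$ is a finite-dimensional Hilbert space of a composite system shared by $m$ spatially separated parties. A set of density matrices $\{\sigma_1,\dots,\sigma_N\}$ is perfectly distinguishable by LOCC if there is a protocol using local operations and classical communication which, applied to an unknown $\sigma_j$ from the set, outputs $j$ with probability $1$; equivalently, there exists a POVM $\{\Pi_1,\dots,\Pi_N\}$ implementable by LOCC with $\mathrm{Tr}(\Pi_i\sigma_j)=\delta_{ij}$. The support of a density matrix is the span of its eigenvectors with nonzero eigenvalues. A POVM is separable if each element is a nonnegative combination of tensor products of positive semidefinite operators on the factors $\mathcal{H}_k$. *)

(* Finite-dimensional quantum systems over an arbitrary
   numClosedFieldType C (the complex numbers being the intended instance). *)
From HB Require Import structures.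
From mathcomp Require Import all_boot all_order all_algebra.
Set Implicit Arguments. Unset Strict Implicit. Unset Printing Implicit Defensive.
Import Order.TTheory GRing.Theory Num.Theory.
Local Open Scope ring_scope.

(* Composite system: m parties, party k has local dimension d k.
   The computational basis of H = H_1 (x) ... (x) H_m is indexed by tuples. *)
Definition idx (m : nat) (d : 'I_m -> nat) : finType :=
  {dffun forall k : 'I_m, 'I_(d k)}.

Definition hdim (m : nat) (d : 'I_m -> nat) : nat := #|idx d|.

Definition adj (C : numClosedFieldType) (p q : nat) (A : 'M[C]_(p, q)) : 'M[C]_(q, p) :=
  (map_mx (fun z => z^*) A)^T.

Definition psd (C : numClosedFieldType) (n : nat) (A : 'M[C]_n) : Prop :=
  adj A = A /\ forall v : 'cV[C]_n, 0 <= (adj v *m A *m v) 0 0.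

Definition density (C : numClosedFieldType) (n : nat) (A : 'M[C]_n) : Prop :=
  psd A /\ \tr A = 1.

(* Subspaces of H are represented by matrices via their row space (%MS).
   support A := the range (column space) of A, as a row space. *)
Definition support (C : numClosedFieldType) (n : nat) (A : 'M[C]_n) : 'M[C]_n := A^T.

Definition supp_eq (C : numClosedFieldType) (n : nat) (A s : 'M[C]_n) : Prop :=
  (support A <= s)%MS /\ \rank (support A) = \rank s.

Definition upd (m : nat) (d : 'I_m -> nat) (k : 'I_m) (e : nat) : 'I_m -> nat :=
  fun l => if l == k then e else d l.

Lemma upd_k (m : nat) (d : 'I_m -> nat) (k : 'I_m) (e : nat) : upd d k e k = e.
Proof. by rewrite /upd eqxx. Qed.

(* K (x) Id : H -> H', for a local Kraus operator K : H_k -> C^e of party k *)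
Definition liftop (C : numClosedFieldType) (m : nat) (d : 'I_m -> nat) (k : 'I_m)
  (e : nat) (K : 'M[C]_(e, d k)) : 'M[C]_(hdim (upd d k e), hdim d) :=
  \matrix_(i, j)
    (K (cast_ord (upd_k d k e) ((enum_val i : idx (upd d k e)) k))
       ((enum_val j : idx d) k)
     * \prod_(l < m | l != k)
         (nat_of_ord ((enum_val i : idx (upd d k e)) l)
            == nat_of_ord ((enum_val j : idx d) l))%:R).

(* At a leaf the parties announce a guess in 'I_N.  At a node,
   party k performs a local measurement (instrument) with Kraus operators
   K 0, ..., K (r-1) from its current system (dim d k) to a new system of
   dimension e; the outcome is broadcast (classical communication) and the
   protocol continues with the sub-protocol chosen by the outcome. *)
Inductive prot (C : numClosedFieldType) (m N : nat) : ('I_m -> nat) -> Type :=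
| PLeaf (d : 'I_m -> nat) : 'I_N -> prot C N d
| PNode (d : 'I_m -> nat) (k : 'I_m) (e r : nat) (K : 'I_r -> 'M[C]_(e, d k)) :
    (forall i : 'I_r, prot C N (upd d k e)) -> prot C N d.

Fixpoint valid (C : numClosedFieldType) (m N : nat) (d : 'I_m -> nat)
  (P : prot C N d) {struct P} : Prop :=
  match P with
  | PLeaf _ _ => True
  | PNode d k e r K ch =>
      \sum_(i < r) adj (K i) *m K i = 1%:M /\ forall i, valid (ch i)
  end.

Fixpoint povm (C : numClosedFieldType) (m N : nat) (d : 'I_m -> nat)
  (P : prot C N d) (o : 'I_N) {struct P} : 'M[C]_(hdim d) :=
  match P with
  | PLeaf d i => ((i == o)%:R)%:M
  | PNode d k e r K ch =>
      \sum_(i < r) adj (liftop (K i)) *m povm (ch i) o *m liftop (K i)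
  end.

Definition pdist (C : numClosedFieldType) (m N : nat) (d : 'I_m -> nat)
  (P : prot C N d) (sigma : 'I_N -> 'M[C]_(hdim d)) : Prop :=
  forall i j : 'I_N, \tr (povm P i *m sigma j) = (i == j)%:R.

Definition LOCC_dist (C : numClosedFieldType) (m N : nat) (d : 'I_m -> nat)
  (sigma : 'I_N -> 'M[C]_(hdim d)) : Prop :=
  exists P : prot C N d, valid P /\ pdist P sigma.

Definition inQ (C : numClosedFieldType) (m N : nat) (d : 'I_m -> nat)
  (s sigma : 'I_N -> 'M[C]_(hdim d)) : Prop :=
  forall i, density (sigma i) /\ supp_eq (sigma i) (s i).

From Pilot Require Import Defs.
From HB Require Import structures.
From mathcomp Require Import all_boot all_order all_algebra.
From mathcomp Require Import ring.
From Stdlib Require Import Classical.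
Set Implicit Arguments. Unset Strict Implicit. Unset Printing Implicit Defensive.
Import Order.TTheory GRing.Theory Num.Theory.
Local Open Scope ring_scope.

(* The key observation is that a protocol P distinguishing one tuple sigma in Q
   distinguishes every tuple sigma' in Q.  Each POVM element Pi_o of P is a sum
   of terms K^dag Pi' K with Pi' a POVM element of a sub-protocol, so by
   induction on P:
   - Tr(Pi_o S) >= 0 for every positive semidefinite S, and
   - Tr(Pi_o S) = 0 implies Tr(Pi_o S') = 0 whenever ker S is contained in
     ker S' (this uses that v^dag S v = 0 forces S v = 0 for S >= 0).
   Two density matrices with the same support have the same kernel, hence the
   off-diagonal zeros Tr(Pi_i sigma_j) = 0 (i <> j) transfer from sigma to
   sigma'; the diagonal entries then equal 1 because the POVM elements of a
   valid protocol sum to the identity and Tr sigma'_j = 1.  The completeness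
   of the POVM is proved by computing (K (x) Id)^dag (K' (x) Id) on the
   computational basis of the composite system. *)

Section Adjoint.
Variable C : numClosedFieldType.

Lemma adjE p q (A : 'M[C]_(p, q)) i j : adj A i j = (A j i)^*.
Proof. by rewrite /adj !mxE. Qed.

Lemma adjK p q (A : 'M[C]_(p, q)) : adj (adj A) = A.
Proof. by apply/matrixP=> i j; rewrite !adjE conjCK. Qed.

Lemma adj_mul p q r (A : 'M[C]_(p, q)) (B : 'M[C]_(q, r)) :
  adj (A *m B) = adj B *m adj A.
Proof.
apply/matrixP=> i j; rewrite adjE !mxE rmorph_sum; apply: eq_bigr => k _.
by rewrite !adjE rmorphM mulrC.
Qed.

Lemma adjD p q (A B : 'M[C]_(p, q)) : adj (A + B) = adj A + adj B.
Proof. by apply/matrixP=> i j; rewrite !mxE rmorphD. Qed.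

Lemma adjZ p q a (A : 'M[C]_(p, q)) : adj (a *: A) = a^* *: adj A.
Proof. by apply/matrixP=> i j; rewrite !mxE rmorphM. Qed.

Lemma adjvv_ge0 n (w : 'cV[C]_n) : 0 <= (adj w *m w) 0 0.
Proof.
rewrite mxE; apply: sumr_ge0 => k _; rewrite adjE -normCKC; exact: exprn_ge0.
Qed.

Lemma adjvv_eq0 n (w : 'cV[C]_n) : (adj w *m w) 0 0 = 0 -> w = 0.
Proof.
rewrite mxE => w0; apply/matrixP=> k j; rewrite (ord1 j) mxE.
have sq_ge0 (i : 'I_n) : true -> 0 <= adj w 0 i * w i 0.
  by move=> _; rewrite adjE -normCKC; exact: exprn_ge0.
have := psumr_eq0P sq_ge0 w0 (i := k) isT; rewrite adjE -normCKC => /eqP.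
by rewrite expf_eq0 /= normr_eq0 => /eqP.
Qed.

End Adjoint.

Section PositiveSemidefinite.
Variable C : numClosedFieldType.

(* For S >= 0, the quadratic form vanishes at v only if S v = 0: with
   w = S v, a = |w|^2 and b = w^dag S w, positivity of S at (b+1) v - a w
   gives -a^2 (b+2) >= 0, hence a = 0. *)
Lemma psd_ker n (S : 'M[C]_n) (v : 'cV[C]_n) :
  psd S -> (adj v *m S *m v) 0 0 = 0 -> S *m v = 0.
Proof.
move=> [adjS posS] v0.
set w := S *m v; set a := (adj w *m w) 0 0; set b := (adj w *m S *m w) 0 0.
have a_ge0 : 0 <= a by exact: adjvv_ge0.
have b_ge0 : 0 <= b by exact: posS.
have adj_w : adj w = adj v *m S by rewrite /w adj_mul adjS.
have vSw : (adj v *m S *m w) 0 0 = a by rewrite /a adj_w.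
have wSv : (adj w *m S *m v) 0 0 = a by rewrite /a -mulmxA.
set u := (b + 1) *: v - a *: w.
have adj_u : adj u = (b + 1) *: adj v - a *: adj w.
  by rewrite /u adjD -scaleN1r !adjZ rmorphN1 scaleN1r !geC0_conj ?addr_ge0.
have := posS u; rewrite adj_u /u.
rewrite !(mulmxDl, mulmxDr, mulmxN, mulNmx) -!scalemxAl -!scalemxAr -?scalemxAl -?scalemxAr.
have entryD (A B : 'M[C]_1) : (A + B) 0 0 = A 0 0 + B 0 0 by rewrite mxE.
have entryN (A : 'M[C]_1) : (- A) 0 0 = - A 0 0 by rewrite mxE.
have entryZ x (A : 'M[C]_1) : (x *: A) 0 0 = x * A 0 0 by rewrite mxE.
rewrite !(entryD, entryN, entryZ) v0 vSw wSv -/b.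
have -> : (b + 1) * ((b + 1) * 0) - a * ((b + 1) * a) +
  (- ((b + 1) * (a * a)) - - (a * (a * b))) = - ((a * a) * (b + 2)) by ring.
rewrite oppr_ge0 => aab_le0.
have aa_le0 : a * a <= 0.
  by rewrite -(pmulr_lle0 _ (_ : 0 < b + 2)) // ltr_wpDl.
have : a * a == 0 by rewrite eq_le aa_le0 mulr_ge0.
by rewrite mulf_eq0 orbb => /eqP; exact: adjvv_eq0.
Qed.

Lemma psd_conj n p (L : 'M[C]_(p, n)) S : psd S -> psd (L *m S *m adj L).
Proof.
move=> [adjS posS]; split; first by rewrite !adj_mul adjK adjS mulmxA.
by move=> v; have := posS (adj L *m v); rewrite adj_mul adjK !mulmxA.
Qed.

Lemma psd_diag n (S : 'M[C]_n) (i : 'I_n) :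
  (adj (delta_mx i 0 : 'cV[C]_n) *m S *m (delta_mx i 0 : 'cV[C]_n)) 0 0 = S i i.
Proof.
have -> : adj (delta_mx i 0 : 'cV[C]_n) = delta_mx 0 i.
  apply/matrixP=> a b; rewrite adjE !mxE.
  by case: (_ == _); case: (_ == _); rewrite /= ?rmorph1 ?rmorph0.
by rewrite -rowE -colE !mxE.
Qed.

Lemma tr_psd_ge0 n (S : 'M[C]_n) : psd S -> 0 <= \tr S.
Proof.
by move=> [_ posS]; apply: sumr_ge0 => i _; rewrite -psd_diag.
Qed.

Lemma tr_psd_eq0 n (S : 'M[C]_n) : psd S -> \tr S = 0 -> S = 0.
Proof.
move=> psdS tr0.
have diag_ge0 (i : 'I_n) : true -> 0 <= S i i.
  by move=> _; rewrite -psd_diag; case: psdS.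
apply/matrixP => a b; rewrite mxE.
have := psd_ker psdS (v := delta_mx b 0).
rewrite psd_diag (psumr_eq0P diag_ge0 tr0) // => /(_ erefl) /matrixP /(_ a 0).
by rewrite -colE !mxE.
Qed.

(* Inclusion of left kernels, ker S <= ker S'; for hermitian matrices this is
   the reverse inclusion of supports. *)
Definition ker_sub n (S S' : 'M[C]_n) : Prop :=
  forall r : 'rV[C]_n, r *m S = 0 -> r *m S' = 0.

Lemma ker_sub0 n (S' : 'M[C]_n) : ker_sub 0 S' -> S' = 0.
Proof.
move=> sub; apply/matrixP=> a b.
have := sub (delta_mx 0 a); rewrite mulmx0 -rowE => /(_ erefl) /matrixP /(_ 0 b).
by rewrite !mxE.
Qed.

Lemma ker_sub_conj n p (L : 'M[C]_(p, n)) S S' : psd S -> ker_sub S S' ->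
  ker_sub (L *m S *m adj L) (L *m S' *m adj L).
Proof.
move=> psdS sub r rLSL0.
have form0 : (adj (adj L *m adj r) *m S *m (adj L *m adj r)) 0 0 = 0.
  rewrite adj_mul !adjK !mulmxA.
  have -> : r *m L *m S *m adj L = r *m (L *m S *m adj L) by rewrite !mulmxA.
  by rewrite rLSL0 !mul0mx mxE.
have rLS0 : (r *m L) *m S = 0.
  have := congr1 (@adj _ _ _) (psd_ker psdS form0).
  by rewrite !adj_mul !adjK (proj1 psdS) => ->; apply/matrixP=> a b; rewrite adjE !mxE rmorph0.
have rLS'0 := sub _ rLS0.
by rewrite !mulmxA rLS'0 mul0mx.
Qed.

Lemma supp_eq_ker_sub n (S S' s : 'M[C]_n) :
  supp_eq S s -> supp_eq S' s -> ker_sub S S'.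
Proof.
move=> [S_s rkS] [S'_s _] r rS0.
have s_S : (s <= Defs.support S)%MS by rewrite -(mxrank_leqif_sup S_s).2 rkS eqxx.
have /submxP [D eD] := submx_trans S'_s s_S.
have -> : S' = S *m D^T by rewrite -[S']trmxK [S'^T]eD trmx_mul trmxK.
by rewrite mulmxA rS0 mul0mx.
Qed.

End PositiveSemidefinite.

Section LocalOperators.
Variables (C : numClosedFieldType) (m : nat) (d : 'I_m -> nat) (k : 'I_m) (e : nat).

Definition agree_off (f g : 'I_m -> nat) : bool :=
  [forall l, (l != k) ==> (f l == g l)].

Lemma prod_agree_off (f g : 'I_m -> nat) :
  \prod_(l < m | l != k) ((f l == g l)%:R : C) = (agree_off f g)%:R.
Proof.
case: (boolP (agree_off f g)) => [/forallP fg | /forallP fg].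
  by rewrite big1 // => l lk; have := fg l; rewrite lk /= => ->.
have [l] : exists l, ~~ ((l != k) ==> (f l == g l)).
  by apply/existsP; rewrite -negb_forall; apply/forallP.
rewrite negb_imply => /andP [lk /negbTE fgl].
by rewrite (bigD1 l) //= fgl mul0r.
Qed.

Lemma agree_off_refl (f : 'I_m -> nat) : agree_off f f.
Proof. by apply/forallP => l; apply/implyP. Qed.

Definition set_party_val (a : nat) (y : idx d) (l : 'I_m) : nat :=
  if l == k then a else y l.

Lemma set_party_val_lt (a : 'I_e) (y : idx d) (l : 'I_m) :
  (set_party_val a y l < upd d k e l)%N.
Proof. by rewrite /set_party_val /upd; case: (l == k). Qed.

Definition set_party (y : idx d) (a : 'I_e) : idx (upd d k e) :=
  @finfun _ (fun l => 'I_(upd d k e l)) (fun l => Ordinal (set_party_val_lt a y l)).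

Definition party_coord (x : idx (upd d k e)) : 'I_e :=
  cast_ord (upd_k d k e) (x k).

Lemma set_partyE (y : idx d) (a : 'I_e) l :
  nat_of_ord (set_party y a l) = set_party_val a y l.
Proof. by rewrite /set_party ffunE. Qed.

Lemma party_coord_set (y : idx d) (a : 'I_e) : party_coord (set_party y a) = a.
Proof. by apply: val_inj; rewrite /party_coord /= set_partyE /set_party_val eqxx. Qed.

Lemma set_party_coord (y : idx d) (x : idx (upd d k e)) :
  agree_off (fun l => x l) (fun l => y l) -> set_party y (party_coord x) = x.
Proof.
move=> /forallP xy; apply/ffunP => l; apply: val_inj.
rewrite /= set_partyE /set_party_val; case: (eqVneq l k) => [-> // | lk].
by have := xy l; rewrite lk /= => /eqP.
Qed.

Lemma agree_off_set_party (y y' : idx d) (a : 'I_e) :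
  agree_off (fun l => set_party y a l) (fun l => y' l) =
  agree_off (fun l => y l) (fun l => y' l).
Proof. by apply: eq_forallb => l; rewrite set_partyE /set_party_val; case: (l == k). Qed.

(* A (x) Id: the operator A acting on the system of party k alone. *)
Definition lift_local (A : 'M[C]_(d k)) : 'M[C]_(hdim d) :=
  \matrix_(j, j') (A ((enum_val j : idx d) k) ((enum_val j' : idx d) k) *
     (agree_off (fun l => (enum_val j : idx d) l)
                (fun l => (enum_val j' : idx d) l))%:R).

(* (K (x) Id)^dag (K' (x) Id) = (K^dag K') (x) Id: the sum over the basis of
   the updated system collapses onto the labels agreeing with the output
   label off party k, which are parametrised by the coordinate of party k. *)
Lemma liftop_adj_mul (K K' : 'M[C]_(e, d k)) :
  adj (liftop K) *m liftop K' = lift_local (adj K *m K').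
Proof.
apply/matrixP => j j'; rewrite !mxE.
set y : idx d := enum_val j; set y' : idx d := enum_val j'.
pose F (x : idx (upd d k e)) :=
  (K (party_coord x) (y k))^* * K' (party_coord x) (y' k) *
  ((agree_off (fun l => x l) (fun l => y l))%:R *
   (agree_off (fun l => x l) (fun l => y' l))%:R).
rewrite (eq_bigr (fun i => F (enum_val i))); last first.
  by move=> i _; rewrite /F !mxE !prod_agree_off rmorphM rmorph_nat mulrACA.
rewrite /hdim -(big_enum_val (A := idx (upd d k e))) /=.
rewrite (bigID (fun x : idx (upd d k e) => agree_off (fun l => x l) (fun l => y l))) /=.
rewrite [X in _ + X]big1 ?addr0; last first.
  by move=> x /negbTE xy; rewrite /F xy !mul0r mulr0.
rewrite (reindex_onto (set_party y) party_coord); last first.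
  by move=> x xy; rewrite set_party_coord.
rewrite (eq_bigl xpredT); last first.
  by move=> a; rewrite agree_off_set_party party_coord_set eqxx andbT agree_off_refl.
rewrite mulr_suml; apply: eq_bigr => a _.
by rewrite /F party_coord_set !agree_off_set_party agree_off_refl !mxE mul1r.
Qed.

Lemma lift_local_sum r (A : 'I_r -> 'M[C]_(d k)) :
  \sum_i lift_local (A i) = lift_local (\sum_i A i).
Proof.
apply/matrixP => j j'; rewrite summxE !mxE summxE mulr_suml.
by apply: eq_bigr => i _; rewrite mxE.
Qed.

Lemma lift_local1 : lift_local 1%:M = 1%:M.
Proof.
apply/matrixP => j j'; rewrite !mxE -natrM mulnb; congr (_%:R); congr nat_of_bool.
set y : idx d := enum_val j; set y' : idx d := enum_val j'.
apply/idP/idP => [/andP [/eqP yk /forallP yy'] | /eqP jj']; last first.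
  by rewrite /y /y' jj' eqxx agree_off_refl.
apply/eqP; apply: enum_val_inj; apply/ffunP => l; apply: val_inj.
have [-> | lk] := eqVneq l k; first by rewrite -/y -/y' yk.
by have := yy' l; rewrite lk => /eqP.
Qed.

Lemma liftop_complete r (K : 'I_r -> 'M[C]_(e, d k)) :
  \sum_i adj (K i) *m K i = 1%:M ->
  \sum_i adj (liftop (K i)) *m liftop (K i) = 1%:M.
Proof.
move=> K_complete.
by rewrite (eq_bigr _ (fun i _ => liftop_adj_mul (K i) (K i))) lift_local_sum
  K_complete lift_local1.
Qed.

End LocalOperators.

Section ProtocolPOVM.
Variables (C : numClosedFieldType) (m N : nat).

(* Linearity of the trace; unlike raddf_sum, the right-hand side mentions the
   plain trace, so that lemmas about \tr still rewrite the summands. *)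
Lemma mxtrace_sum n I (r : seq I) (pr : pred I) (F : I -> 'M[C]_n) :
  \tr (\sum_(i <- r | pr i) F i) = \sum_(i <- r | pr i) \tr (F i).
Proof. exact: raddf_sum. Qed.

Lemma tr_conj n p (L : 'M[C]_(p, n)) (Pi : 'M[C]_p) S :
  \tr (adj L *m Pi *m L *m S) = \tr (Pi *m (L *m S *m adj L)).
Proof. by rewrite -!mulmxA mxtrace_mulC !mulmxA. Qed.

Lemma povm_tr_ge0 (d : 'I_m -> nat) (P : prot C N d) o S :
  psd S -> 0 <= \tr (povm P o *m S).
Proof.
elim: P S => [d' i | d' k e r K ch IH] S psdS /=.
  by rewrite mul_scalar_mx mxtraceZ mulr_ge0 ?ler0n ?tr_psd_ge0.
rewrite mulmx_suml mxtrace_sum; apply: sumr_ge0 => i _.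
by rewrite tr_conj; apply/IH/psd_conj.
Qed.

Lemma povm_tr_eq0_transfer (d : 'I_m -> nat) (P : prot C N d) o S S' :
  psd S -> ker_sub S S' -> \tr (povm P o *m S) = 0 -> \tr (povm P o *m S') = 0.
Proof.
elim: P S S' => [d' i | d' k e r K ch IH] S S' psdS sub /=.
  rewrite !mul_scalar_mx !mxtraceZ => /eqP; rewrite mulf_eq0.
  case/orP => [/eqP -> | /eqP trS0]; first by rewrite mul0r.
  by move: sub; rewrite (tr_psd_eq0 psdS trS0) => /ker_sub0 ->; rewrite mxtrace0 mulr0.
rewrite !mulmx_suml !mxtrace_sum => sum0.
have term_ge0 (i : 'I_r) : true ->
    0 <= \tr (adj (liftop (K i)) *m povm (ch i) o *m liftop (K i) *m S).
  by move=> _; rewrite tr_conj; apply/povm_tr_ge0/psd_conj.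
apply: big1 => i _; rewrite tr_conj.
apply: (IH i (liftop (K i) *m S *m adj (liftop (K i)))).
- exact: psd_conj.
- exact: ker_sub_conj.
- by rewrite -tr_conj (psumr_eq0P term_ge0 sum0).
Qed.

Lemma povm_sum (d : 'I_m -> nat) (P : prot C N d) :
  valid P -> \sum_o povm P o = 1%:M.
Proof.
elim: P => [d' i | d' k e r K ch IH] /=.
  move=> _; rewrite (bigD1 i) //= eqxx big1 ?addr0 // => o oi.
  by rewrite eq_sym (negbTE oi); apply/matrixP => a b; rewrite !mxE mul0rn.
move=> [K_complete ch_valid]; rewrite exchange_big /=.
rewrite (eq_bigr (fun i => adj (liftop (K i)) *m liftop (K i))).
  exact: liftop_complete.
by move=> i _; rewrite -mulmx_suml -mulmx_sumr IH // mulmx1.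
Qed.

Lemma pdist_transfer (d : 'I_m -> nat) (P : prot C N d)
    (sigma sigma' : 'I_N -> 'M[C]_(hdim d)) :
  valid P -> pdist P sigma ->
  (forall j, psd (sigma j)) -> (forall j, ker_sub (sigma j) (sigma' j)) ->
  (forall j, \tr (sigma' j) = 1) ->
  pdist P sigma'.
Proof.
move=> validP distP psd_sigma sub tr_sigma' i j.
have off_diag o : o != j -> \tr (povm P o *m sigma' j) = 0.
  move=> oj; apply: (povm_tr_eq0_transfer (psd_sigma j) (sub j)).
  by rewrite distP (negbTE oj).
have [-> | ij] := eqVneq i j; last by rewrite off_diag.
have tr_split : \tr (sigma' j) = \sum_o \tr (povm P o *m sigma' j).
  by rewrite -mxtrace_sum -mulmx_suml povm_sum // mul1mx.
by rewrite -(tr_sigma' j) tr_split (bigD1 j) //= big1 ?addr0 // => o /off_diag.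
Qed.

End ProtocolPOVM.

Lemma inQ_pdist_transfer (C : numClosedFieldType) m N (d : 'I_m -> nat)
    (s sigma sigma' : 'I_N -> 'M[C]_(hdim d)) (P : prot C N d) :
  valid P -> pdist P sigma -> inQ s sigma -> inQ s sigma' -> pdist P sigma'.
Proof.
move=> validP distP Q_sigma Q_sigma'.
apply: (pdist_transfer validP distP).
- by move=> j; have [[]] := Q_sigma j.
- by move=> j; apply: (supp_eq_ker_sub (proj2 (Q_sigma j)) (proj2 (Q_sigma' j))).
- by move=> j; have [[]] := Q_sigma' j.
Qed.

Theorem proposition3 (C : numClosedFieldType) (m : nat) (d : 'I_m -> nat) (N : nat)
  (s : 'I_N -> 'M[C]_(hdim d))
  (s_nz : forall i, s i != 0)
  (s_orth : forall i j, i != j -> s i *m adj (s j) = 0) :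
  ((forall sigma, inQ s sigma -> LOCC_dist sigma) \/
   (forall sigma, inQ s sigma -> ~ LOCC_dist sigma)) /\
  ((forall sigma, inQ s sigma -> LOCC_dist sigma) ->
   exists P : prot C N d, valid P /\ forall sigma, inQ s sigma -> pdist P sigma).
Proof.
split.
  have [[sigma0 [Q_sigma0 [P [validP distP]]]] | no_dist] :=
    classic (exists sigma, inQ s sigma /\ LOCC_dist sigma).
    by left => sigma Q_sigma; exists P; split; last exact: inQ_pdist_transfer Q_sigma.
  by right => sigma Q_sigma dist_sigma; apply: no_dist; exists sigma.
move=> all_dist.
have [[sigma0 Q_sigma0] | Q_empty] := classic (exists sigma, inQ s sigma).
  have [P [validP distP]] := all_dist sigma0 Q_sigma0.
  by exists P; split=> // sigma; exact: inQ_pdist_transfer Q_sigma0.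
(* Q is empty, so any protocol works; for N = 0 the empty tuple lies in Q. *)
case: N s {s_nz s_orth all_dist} Q_empty => [|N] s Q_empty.
  by case: Q_empty; exists (fun _ => 0) => -[].
by exists (PLeaf C d ord0); split=> // sigma Q_sigma; case: Q_empty; exists sigma.
Qed.
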